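(* Let $n\ge 2$. The map sending a fully heterochronous ranked tree shape with $n$ leaves to its $\mathbf{F}$-matrix is a bijection between the set of fully heterochronous ranked tree shapes with $n$ leaves and the set of $(2n-2)\times(2n-2)$ lower triangular matrices $F=(F_{i,j})_{0\le i,j\le 2n-3}$ of non-negative integers satisfying the following constraints. 1. Rows are monotone increasing: $F_{i,j-1}\le F_{i,j}$ for $1\le j\le i\le 2n-3$. 2. Columns are monotone decreasing with difference at most $1$: $F_{i-1,j}-1\le F_{i,j}\le F_{i-1,j}$ for $0\le j<i\le 2n-3$. 3. (a) The diagonal entries are positive and satisfy $F_{0,0}=2$, $F_{i,i}=F_{i-1,i-1}\pm 1$ for $0<i<2n-3$, and $F_{2n-3,2n-3}=1$. (In the tree, $F_{i,i}=F_{i-1,i-1}-1$ if the node of rank $i$ is a leaf, i.e. the $i$-th event is a sampling event, and $F_{i,i}=F_{i-1,i-1}+1$ if it is an internal node, i.e. a coalescent event.) (b) The subdiagonal entries satisfy $F_{i,i-1}=F_{i-1,i-1}-1$ for $1\le i\le 2n-3$. (c) For $2\le i\le 2n-3$ and $1\le j\le i-2$, $$F_{i,j-1}+F_{i-1,j}-F_{i-1,j-1}-1\le F_{i,j}\le F_{i,j-1}+F_{i-1,j}-F_{i-1,j-1}.$$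
   Context: A fully heterochronous ranked tree shape with $n$ leaves is a rooted full binary tree (every node has out-degree $0$ or $2$), without leaf labels, with $n$ leaves and $n-1$ internal nodes, together with a total ordering of all $2n-1$ nodes (leaves included) such that nodes appear in increasing order along every path from the root to a leaf; the position of a node in this order, numbered $0,1,\dots,2n-2$, is its rank (the root has rank $0$). Two such objects are identified if there is an isomorphism of rooted trees preserving ranks. Its $\mathbf{F}$-matrix is the $(2n-2)\times(2n-2)$ lower triangular matrix $F$, with indices running from $0$ to $2n-3$, where for $0\le j\le i$ the entry $F_{i,j}$ is the number of edges from a node $v$ to a node $w$ (with $v$ the parent of $w$) such that the rank of $v$ is at most $j$ and the rank of $w$ is larger than $i$. *)

From mathcomp Require Import all_boot all_order all_algebra.
Unset Printing Implicit Defensive.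

(* A fully heterochronous ranked tree shape with n leaves, up to
   rank-preserving isomorphism, is encoded canonically by naming every node by
   its rank (0 .. 2n-2) and recording its parent: p v = rank of the parent of
   the node of rank v (the value p 0 for the root is a dummy, fixed to 0). *)

Definition nchildren (n : nat) (p : {ffun 'I_(2 * n - 1) -> 'I_(2 * n - 1)})
  (v : 'I_(2 * n - 1)) : nat :=
  #|[set w : 'I_(2 * n - 1) | (val w != 0) && (p w == v)]|.

Definition is_rts (n : nat) (p : {ffun 'I_(2 * n - 1) -> 'I_(2 * n - 1)}) : bool :=
  [&& [forall v, if val v == 0 then val (p v) == 0 else val (p v) < val v],
      [forall v, (nchildren n p v == 0) || (nchildren n p v == 2)]
    & #|[set v | nchildren n p v == 0]| == n].

Definition rts (n : nat) := {p : {ffun 'I_(2 * n - 1) -> 'I_(2 * n - 1)} | is_rts n p}.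

Definition Fmat {n : nat} (t : rts n) : 'M[nat]_(2 * n - 2) :=
  \matrix_(i, j) if val j <= val i then
      #|[set w : 'I_(2 * n - 1) | [&& val w != 0, val (val t w) <= val j & val i < val w]]|
    else 0.

(* access to matrix entries by natural-number indices (0 outside range) *)
Definition mat_at {m : nat} (M : 'M[nat]_m) (i j : nat) : nat :=
  match insub i, insub j with
  | Some i', Some j' => M i' j'
  | _, _ => 0
  end.

(* The constraints of the theorem, with N = 2n-3.  Subtractions are
   rearranged into additions so that nat arithmetic is exact. *)
Definition Fvalid (n : nat) (M : 'M[nat]_(2 * n - 2)) : Prop :=
  let N := 2 * n - 3 in
  let F := mat_at (m := 2 * n - 2) M in
  (forall i j : 'I_(2 * n - 2), val i < val j -> M i j = 0) /\
  (forall i j, 1 <= j -> j <= i -> i <= N -> F i (j - 1) <= F i j) /\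
  (forall i j, j < i -> i <= N ->
     F (i - 1) j <= F i j + 1 /\ F i j <= F (i - 1) j) /\
  (forall i, i <= N -> 0 < F i i) /\
  F 0 0 = 2 /\
  (forall i, 0 < i -> i < N ->
     F i i = F (i - 1) (i - 1) + 1 \/ F i i + 1 = F (i - 1) (i - 1)) /\
  F N N = 1 /\
  (forall i, 1 <= i -> i <= N -> F i (i - 1) + 1 = F (i - 1) (i - 1)) /\
  (forall i j, 2 <= i -> i <= N -> 1 <= j -> j <= i - 2 ->
     F i (j - 1) + F (i - 1) j <= F i j + F (i - 1) (j - 1) + 1 /\
     F i j + F (i - 1) (j - 1) <= F i (j - 1) + F (i - 1) j).

From mathcomp Require Import all_boot all_order all_algebra zify.

(* Read a tree through its parent map q (q w < w).  The entry F i j counts the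
   nodes w > i whose parent has rank <= j, so passing from row k-1 to row k
   loses exactly the edge into node k, in the columns j >= q k: the parent of k
   is the first column in which row k drops below row k-1, and F determines
   the tree.  Conversely, for a matrix satisfying the constraints, 1, 2, 3b and
   3c make the columns where row k drops an interval [p_k, k) with p_k < k.
   Taking p_k as the parent of k, downward induction on the row shows that F
   is the F-matrix of this parent map.  The diagonal counts lineages, and
   F_{k,k} - F_{k-1,k-1} + 1 is the number of children of k, so 3a makes the
   tree binary; the parity of the diagonal, fixed by F_{0,0} = 2, rules out a
   single child at rank 2n-3. *)

Lemma find_iota_upclosed (a : pred nat) k :
  (forall j, j.+1 < k -> a j -> a j.+1) -> 0 < k -> a (k - 1) ->
  forall j, j < k -> a j = (find a (iota 0 k) <= j).
Proof.
move=> a_up k_gt0 a_last.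
have has_a : has a (iota 0 k) by apply/hasP; exists (k - 1); rewrite ?mem_iota; lia.
have find_lt : find a (iota 0 k) < k by have := has_a; rewrite has_find size_iota.
have a_find : a (find a (iota 0 k)) by have := nth_find 0 has_a; rewrite nth_iota.
move=> j j_lt; case: leqP => [le_find | lt_j].
  have a_from_find : forall d, find a (iota 0 k) + d < k -> a (find a (iota 0 k) + d).
    elim=> [|d IH] lt_d; first by rewrite addn0.
    by rewrite addnS; apply: a_up; [lia | apply: IH; lia].
  by have := a_from_find (j - find a (iota 0 k)); rewrite subnKC //; apply.
by have := before_find 0 lt_j; rewrite nth_iota //; lia.
Qed.

Lemma find_iota_threshold (a : pred nat) k p :
  p < k -> (forall j, j < k -> a j = (p <= j)) -> find a (iota 0 k) = p.
Proof.
move=> p_lt aE.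
have findE : forall j, j < k -> a j = (find a (iota 0 k) <= j).
  by apply: find_iota_upclosed => [j lt_j||]; rewrite ?aE //; lia.
have find_le : find a (iota 0 k) <= p by rewrite -findE // aE.
have : a (find a (iota 0 k)) by rewrite findE ?leqnn //; lia.
by rewrite aE; lia.
Qed.

Lemma mat_at_out m (M : 'M[nat]_m) i j : m <= i -> mat_at M i j = 0.
Proof. by move=> le_m; rewrite /mat_at; case: insubP => // i' lt_i; lia. Qed.

Lemma mat_atE m (M : 'M[nat]_m) (i j : 'I_m) : mat_at M i j = M i j.
Proof. by rewrite /mat_at !valK. Qed.

Section Crossing.
Variables (m : nat) (q : nat -> nat).

Definition crossing i j := \sum_(i.+1 <= w < m) (q w <= j : nat).
Definition nchild v := \sum_(1 <= w < m) (q w == v : nat).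

Lemma crossing_succ i j : i.+1 < m -> crossing i j = (q i.+1 <= j) + crossing i.+1 j.
Proof. by move=> lt_i; rewrite /crossing big_ltn. Qed.

Lemma crossing_out i j : m <= i.+1 -> crossing i j = 0.
Proof. by move=> le_m; rewrite /crossing big_geq. Qed.

Lemma crossing_mono i : {homo crossing i : j j' / j <= j'}.
Proof.
move=> j j' le_j; apply: leq_sum => w _.
by case: (leqP (q w) j) => //= le_q; rewrite (leq_trans le_q le_j).
Qed.

Lemma nchild0 : nchild 0 = crossing 0 0.
Proof. by apply: eq_bigr => w _; rewrite leqn0. Qed.

Hypothesis q_lt : forall w, 0 < w < m -> q w < w.

Lemma crossing_subdiag k : k.+1 < m -> crossing k.+1 k + 1 = crossing k k.
Proof.
move=> lt_k; have q_le : q k.+1 <= k by rewrite -ltnS; apply: q_lt; lia.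
by rewrite (crossing_succ k k lt_k) q_le addnC.
Qed.

Lemma crossing_diag_gt0 i : i.+1 < m -> 0 < crossing i i.
Proof. by move=> lt_i; rewrite -(crossing_subdiag i lt_i) addn1. Qed.

(* Between ranks k and k+1 the lineages through k+1 are traded: the edge into
   k+1 stops crossing, the edges out of k+1 start crossing. *)
Lemma crossing_diag_succ k :
  k.+1 < m -> crossing k.+1 k.+1 + 1 = crossing k k + nchild k.+1.
Proof.
move=> lt_k; rewrite -(crossing_subdiag k lt_k).
suff -> : crossing k.+1 k.+1 = crossing k.+1 k + nchild k.+1 by lia.
rewrite /nchild (@big_cat_nat _ _ _ k.+2) //= big_nat_cond big1 ?add0n.
  rewrite -big_split /=; apply: eq_bigr => w _.
  case: (ltngtP (q w) k.+1) => cmp /=.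
  - by rewrite -ltnS cmp.
  - by rewrite leqNgt (ltnW cmp).
  - by rewrite cmp ltnn.
move=> w /andP [/andP [w_gt0 lt_w] _]; have := q_lt w; rewrite w_gt0; lia.
Qed.

Lemma sum_nchild : \sum_(0 <= v < m) nchild v = m.-1.
Proof.
rewrite /nchild exchange_big_nat /= (eq_big_nat _ _ (F2 := fun=> 1)).
  by rewrite sum_nat_const_nat muln1 subn1.
move=> w w_range; have lt_q : q w < m by have := q_lt w; lia.
rewrite (bigD1_seq (q w)) ?iota_uniq ?mem_iota //=; last lia.
by rewrite eqxx big1 // => v; rewrite eq_sym => /negbTE ->.
Qed.

End Crossing.

Lemma eq_crossing m q1 q2 i j : (forall w, w < m -> q1 w = q2 w) ->
  crossing m q1 i j = crossing m q2 i j.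
Proof. by move=> eq_q; apply: eq_big_nat => w w_range; rewrite eq_q //; lia. Qed.

Lemma eq_nchild m q1 q2 v : (forall w, w < m -> q1 w = q2 w) ->
  nchild m q1 v = nchild m q2 v.
Proof. by move=> eq_q; apply: eq_big_nat => w w_range; rewrite eq_q //; lia. Qed.

Lemma crossingE m q i j : i < m ->
  \sum_(0 <= w < m) [&& w != 0, q w <= j & i < w] = crossing m q i j.
Proof.
move=> lt_i; rewrite (@big_cat_nat _ _ _ i.+1) //= big_nat_cond big1 ?add0n.
  apply: eq_big_nat => w w_range.
  have -> : w != 0 by lia.
  have -> : i < w by lia.
  by rewrite andbT.
move=> w /andP [w_range _]; have -> : i < w = false by lia.
by rewrite !andbF.
Qed.

Lemma card_ord_sum m (P : pred 'I_m) (c : nat -> bool) :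
  (forall w, P w = c (val w)) -> #|[set w | P w]| = \sum_(0 <= w < m) c w.
Proof.
move=> PE; rewrite -sum1_card big_mkcond /= big_mkord.
by apply: eq_bigr => w _; rewrite inE PE; case: (c w).
Qed.

Definition parentn m (p : {ffun 'I_m -> 'I_m}) (w : nat) : nat :=
  if insub w is Some w' then val (p w') else 0.

Arguments parentn {m} p w.

Lemma parentnE m (p : {ffun 'I_m -> 'I_m}) (w : 'I_m) : parentn p w = val (p w).
Proof. by rewrite /parentn valK. Qed.

Lemma nchildE m q v : \sum_(0 <= w < m) ((w != 0) && (q w == v)) = nchild m q v.
Proof.
case: m => [|m]; first by rewrite /nchild !big_geq.
rewrite big_ltn //= add0n; apply: eq_big_nat => w w_range.
by have -> : w != 0 by lia.
Qed.

Lemma nchildrenE n (p : {ffun 'I_(2 * n - 1) -> 'I_(2 * n - 1)}) v :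
  nchildren n p v = nchild (2 * n - 1) (parentn p) v.
Proof.
rewrite -nchildE; apply: card_ord_sum => w.
by rewrite parentnE.
Qed.

Definition drops (F : nat -> nat -> nat) k j := F k j < F (k - 1) j.

Definition decode (F : nat -> nat -> nat) k := find (drops F k) (iota 0 k).

Lemma decode_le F k : decode F k <= k.
Proof. by rewrite -[leqRHS](size_iota 0) find_size. Qed.

Lemma decode_col_step F k p : p < k ->
  (forall j, j < k -> F (k - 1) j = F k j + (p <= j)) -> decode F k = p.
Proof.
move=> lt_p colE; apply: find_iota_threshold => // j lt_j.
by rewrite /drops colE //; case: (p <= j); lia.
Qed.

Section RankedTree.
Variables (n : nat) (t : rts n).
Local Notation m := (2 * n - 1).
Local Notation q := (parentn (val t)).

Lemma rts_root (w : 'I_m) : val w = 0 -> val (val t w) = 0.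
Proof.
move=> w0; have /and3P [/forallP parent_lt _ _] := valP t.
by have := parent_lt w; rewrite w0 eqxx => /eqP.
Qed.

Lemma rts_parent_lt w : 0 < w < m -> q w < w.
Proof.
move=> /andP [w_gt0 lt_w]; have /and3P [/forallP parent_lt _ _] := valP t.
have := parent_lt (Ordinal lt_w); rewrite -[w]/(val (Ordinal lt_w)) -parentnE /=.
by rewrite ifN // -lt0n.
Qed.

Lemma rts_nchild v : v < m -> nchild m q v = 0 \/ nchild m q v = 2.
Proof.
move=> lt_v; have /and3P [_ /forallP binary _] := valP t.
have := binary (Ordinal lt_v); rewrite nchildrenE /=.
by case/orP => /eqP ->; [left | right].
Qed.

Lemma Fmat_crossing i j : j <= i -> j < 2 * n - 2 -> i < m ->
  mat_at (Fmat t) i j = crossing m q i j.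
Proof.
move=> le_ji lt_j lt_i; rewrite /mat_at.
case: insubP => [i' _ i'E | ]; last first.
  by rewrite -leqNgt => i_out; rewrite crossing_out //; lia.
case: insubP => [j' _ j'E | ]; last by rewrite lt_j.
rewrite mxE i'E j'E le_ji -crossingE //; apply: card_ord_sum => w.
by rewrite parentnE.
Qed.

Lemma Fmat_valid : 2 <= n -> Fvalid n (Fmat t).
Proof.
move=> n_ge2; have q_lt := rts_parent_lt.
have FE i j : j <= i -> i <= 2 * n - 3 -> mat_at (Fmat t) i j = crossing m q i j.
  by move=> *; apply: Fmat_crossing; lia.
rewrite /Fvalid; cbv zeta.
split; first by move=> i j lt_ij; rewrite mxE leqNgt lt_ij.
split.
  by move=> i j *; rewrite !FE; try lia; apply: crossing_mono; lia.
split.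
  move=> [|k] j lt_j le_kN //; rewrite subn1 /= !FE; try lia.
  by rewrite (crossing_succ _ _ k j); [case: (q k.+1 <= j); lia | lia].
split.
  by move=> i le_iN; rewrite FE //; apply: crossing_diag_gt0 => //; lia.
split.
  rewrite FE // -nchild0; have := crossing_diag_gt0 _ _ q_lt 0; rewrite -nchild0.
  by case: (rts_nchild 0) => [|->|->] //; lia.
split.
  move=> [|k] // _ lt_kN; rewrite subn1 /= !FE; try lia.
  by have := crossing_diag_succ _ _ q_lt k; case: (rts_nchild k.+1) => [|->|->]; lia.
split.
  rewrite FE // -(crossing_subdiag _ _ q_lt) ?crossing_out //; lia.
split.
  move=> [|k] // _ le_kN; rewrite subn1 /= !FE; try lia.
  by apply: (crossing_subdiag _ _ q_lt); lia.
move=> [|k] [|l] // _ le_kN _ le_lk; rewrite !subn1 /= !FE; try lia.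
by rewrite !(crossing_succ _ _ k); try lia; case: (q k.+1 <= l); case: (q k.+1 <= l.+1); lia.
Qed.

Lemma Fmat_col_step k j : 0 < k < m -> j < k ->
  mat_at (Fmat t) (k - 1) j = mat_at (Fmat t) k j + (q k <= j).
Proof.
case: k => [|k] // k_range lt_j; rewrite subn1 /= !Fmat_crossing; try lia.
by rewrite (crossing_succ _ _ k j) 1?addnC //; lia.
Qed.

Lemma decode_Fmat k : 0 < k < m -> decode (mat_at (Fmat t)) k = q k.
Proof.
move=> k_range; apply: decode_col_step => [|j]; first exact: rts_parent_lt.
exact: Fmat_col_step.
Qed.

End RankedTree.

Lemma Fmat_inj n : injective (@Fmat n).
Proof.
move=> t1 t2 eqF; apply: val_inj; apply/ffunP => w; apply: val_inj.
case: (posnP (val w)) => [w0 | w_gt0]; first by rewrite !rts_root.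
by rewrite -!parentnE -!decode_Fmat ?eqF // w_gt0 ltn_ord.
Qed.

Definition decode_tree n (F : nat -> nat -> nat) :
    {ffun 'I_(2 * n - 1) -> 'I_(2 * n - 1)} :=
  [ffun w : 'I_(2 * n - 1) => Ordinal (leq_ltn_trans (decode_le F w) (ltn_ord w))].

Lemma parentn_decode_tree n F w :
  w < 2 * n - 1 -> parentn (decode_tree n F) w = decode F w.
Proof. by move=> lt_w; rewrite -[w]/(val (Ordinal lt_w)) parentnE ffunE. Qed.

Section Decode.
Variables (n : nat) (M : 'M[nat]_(2 * n - 2)).
Local Notation m := (2 * n - 1).
Local Notation N := (2 * n - 3).
Local Notation F := (mat_at M).
Hypotheses (n_ge2 : 2 <= n)
  (M_lower : forall i j : 'I_(2 * n - 2), val i < val j -> M i j = 0)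
  (F_row : forall i j, 1 <= j -> j <= i -> i <= N -> F i (j - 1) <= F i j)
  (F_col : forall i j, j < i -> i <= N ->
     F (i - 1) j <= F i j + 1 /\ F i j <= F (i - 1) j)
  (F00 : F 0 0 = 2)
  (F_diag : forall i, 0 < i -> i < N ->
     F i i = F (i - 1) (i - 1) + 1 \/ F i i + 1 = F (i - 1) (i - 1))
  (FNN : F N N = 1)
  (F_subdiag : forall i, 1 <= i -> i <= N -> F i (i - 1) + 1 = F (i - 1) (i - 1))
  (F_corner : forall i j, 2 <= i -> i <= N -> 1 <= j -> j <= i - 2 ->
     F i (j - 1) + F (i - 1) j <= F i j + F (i - 1) (j - 1) + 1 /\
     F i j + F (i - 1) (j - 1) <= F i (j - 1) + F (i - 1) j).

Lemma F_out i j : N < i -> F i j = 0.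
Proof. by move=> lt_i; apply: mat_at_out; lia. Qed.

Lemma row_mono i j j' : j <= j' -> j' <= i -> i <= N -> F i j <= F i j'.
Proof.
elim: j' => [|j' IH] le_jj' le_j'i le_iN.
  by move: le_jj'; rewrite leqn0 => /eqP ->.
case: (ltngtP j j'.+1) le_jj' => // [lt_j | ->] _ //.
apply: leq_trans (IH _ _ _) _; try lia.
by have := F_row i j'.+1; rewrite subn1 /=; apply; lia.
Qed.

Lemma col_step_bound k j : 0 < k < m -> j < k -> F k j <= F (k - 1) j <= F k j + 1.
Proof.
move=> k_range lt_j; case: (leqP k N) => [le_kN | lt_Nk].
  by have := F_col k j lt_j le_kN; lia.
have le_1 : F N j <= 1 by rewrite -[leqRHS]FNN; apply: row_mono; lia.
by rewrite (F_out k j) // (_ : k - 1 = N); lia.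
Qed.

Lemma drops_pred k : 0 < k < m -> drops F k (k - 1).
Proof.
move=> k_range; rewrite /drops; case: (leqP k N) => [le_kN | lt_Nk].
  by have := F_subdiag k; lia.
by rewrite F_out // (_ : k - 1 = N) ?FNN; lia.
Qed.

Lemma drops_succ k j : 0 < k < m -> j.+1 < k -> drops F k j -> drops F k j.+1.
Proof.
rewrite /drops => k_range lt_j drops_j.
case: (leqP k N) => [le_kN | lt_Nk]; last first.
  have le_row : F (k - 1) j <= F (k - 1) j.+1 by apply: row_mono; lia.
  by rewrite (F_out k j) // in drops_j; rewrite F_out //; lia.
have [lt_j2 | j2E] : j.+2 < k \/ j.+2 = k by lia.
  have [_] := F_corner k j.+1 ltac:(lia) le_kN ltac:(lia) ltac:(lia).
  have := col_step_bound k j k_range (ltnW lt_j).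
  by rewrite subSS subn0; lia.
by subst k; have := drops_pred j.+2 k_range; rewrite /drops subn1.
Qed.

Lemma drops_decode k j : 0 < k < m -> j < k -> drops F k j = (decode F k <= j).
Proof.
move=> k_range; apply: find_iota_upclosed; last exact: drops_pred.
  by move=> j' lt_j'; apply: drops_succ.
by case/andP: k_range.
Qed.

Lemma decode_lt k : 0 < k < m -> decode F k < k.
Proof.
move=> k_range; have := drops_decode k (k - 1) k_range.
by rewrite drops_pred //; lia.
Qed.

Lemma col_step k j : 0 < k < m -> j < k -> F (k - 1) j = F k j + (decode F k <= j).
Proof.
move=> k_range lt_j; have := col_step_bound k j k_range lt_j.
by rewrite -drops_decode // /drops; case: ltnP; lia.
Qed.

Lemma F_crossing i j : j <= i -> i < m -> F i j = crossing m (decode F) i j.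
Proof.
suff FE d : i + d = 2 * n - 2 -> j <= i -> F i j = crossing m (decode F) i j.
  by move=> le_ji lt_i; apply: (FE (2 * n - 2 - i)); lia.
elim: d i => [|d IH] i sum_i le_ji; first by rewrite F_out ?crossing_out; lia.
rewrite (crossing_succ _ _ i j) -?IH; try lia.
have colE := col_step i.+1 j; rewrite subSS subn0 in colE.
by rewrite colE; lia.
Qed.

Lemma diag_parity i : i < N -> odd (F i i) = odd i.
Proof.
elim: i => [|i IH] lt_i; first by rewrite F00.
have IH' := IH (ltnW lt_i).
have := F_diag i.+1 isT lt_i; rewrite subSS subn0.
case=> [-> | diagE]; first by rewrite addn1 /= IH'.
by rewrite /= -IH' -diagE addn1 /= negbK.
Qed.

Lemma F_diag_penult : F (N - 1) (N - 1) = 2.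
Proof.
have subdiag := F_subdiag N ltac:(lia) (leqnn N).
have le_1 : F N (N - 1) <= 1 by rewrite -[leqRHS]FNN; apply: row_mono; lia.
have N1_even : odd (N - 1) = false by rewrite (_ : N - 1 = (n - 2).*2) ?odd_double; lia.
have := diag_parity (N - 1) ltac:(lia); rewrite N1_even.
by have [->|->] : F (N - 1) (N - 1) = 1 \/ F (N - 1) (N - 1) = 2 by lia.
Qed.

Lemma decode_nchild v : v < m ->
  nchild m (decode F) v = 0 \/ nchild m (decode F) v = 2.
Proof.
case: v => [|k] lt_k; first by rewrite nchild0 -F_crossing // F00; right.
have := crossing_diag_succ _ _ decode_lt k lt_k.
case: (ltngtP k.+1 N) => [lt_kN | lt_Nk | kE].
- rewrite -!F_crossing; try lia.
  by have := F_diag k.+1 isT lt_kN; rewrite subSS subn0; lia.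
- rewrite crossing_out -?F_crossing; try lia.
  by rewrite (_ : k = N) ?FNN; lia.
- rewrite -!F_crossing; try lia.
  by rewrite kE FNN (_ : k = N - 1) ?F_diag_penult; lia.
Qed.

Lemma decode_tree_rts : is_rts n (decode_tree n F).
Proof.
have nchildE (v : 'I_m) : nchildren n (decode_tree n F) v = nchild m (decode F) v.
  by rewrite nchildrenE; apply: eq_nchild => w; apply: parentn_decode_tree.
apply/and3P; split.
- apply/forallP => v; rewrite ffunE /=.
  by case: eqP => [-> // | /eqP v_neq0]; apply: decode_lt; rewrite lt0n v_neq0 ltn_ord.
- by apply/forallP => v; rewrite nchildE; case: (decode_nchild v (ltn_ord v)) => ->.
rewrite (card_ord_sum _ _ (fun v => nchild m (decode F) v == 0)); last first.
  by move=> v; rewrite nchildE.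
have total := sum_nchild m (decode F) decode_lt.
have : \sum_(0 <= v < m) nchild m (decode F) v +
       2 * \sum_(0 <= v < m) (nchild m (decode F) v == 0 : nat) = 2 * m.
  rewrite big_distrr -big_split /= (eq_big_nat _ _ (F2 := fun=> 2)) ?sum_nat_const_nat.
    by rewrite subn0 mulnC.
  by move=> v v_range; case: (decode_nchild v _) => [|->|->]; lia.
by move/eqP; lia.
Qed.

Lemma Fmat_surj : exists t : rts n, Fmat t = M.
Proof.
exists (exist _ (decode_tree n F) decode_tree_rts); apply/matrixP => i j.
case: (leqP j i) => [le_ji | lt_ij]; last by rewrite mxE leqNgt lt_ij M_lower.
have lt_i := ltn_ord i; have lt_j := ltn_ord j.
rewrite -!mat_atE Fmat_crossing /=; try lia.
rewrite (eq_crossing _ _ (decode F)) -?F_crossing //; try lia.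
exact: parentn_decode_tree.
Qed.

End Decode.

Theorem theorem2 (n : nat) (hn : 2 <= n) :
  (forall t : rts n, Fvalid n (Fmat t)) /\
  injective (@Fmat n) /\
  (forall M : 'M[nat]_(2 * n - 2), Fvalid n M -> exists t : rts n, Fmat t = M).
Proof.
split; first by move=> t; exact: Fmat_valid.
split; first exact: Fmat_inj.
move=> M [lower [row [col [_ [F00 [diag [FNN [subdiag corner]]]]]]]].
exact: (Fmat_surj _ _ hn lower row col F00 diag FNN subdiag corner).
Qed.
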